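(* Let $A$ be a skew brace. Then $\mathrm{Spec}\,A$ (with the spectral topology) is irreducible if and only if $\mathrm{Nil}\,A$ is a prime ideal.
   Context: A (left) skew brace is a triple $(A,+,\circ)$ where $(A,+)$ and $(A,\circ)$ are groups such that $a\circ(b+c)=a\circ b-a+a\circ c$ for all $a,b,c$; common identity $e$. Put $\lambda_a(b)=-a+a\circ b$ and $a*b=-a+a\circ b-b$. An ideal is a normal subgroup $I$ of both $(A,+)$ and $(A,\circ)$ with $\lambda_a(I)\subseteq I$ for all $a$. A prime ideal is a proper ideal $P$ such that for any subsets $X,Y$ of $A$, $\{x*y\mid x\in X,y\in Y\}\subseteq P$ implies $X\subseteq P$ or $Y\subseteq P$; $\mathrm{Spec}\,A$ is the set of prime ideals, with the spectral topology whose closed sets are $H(I)=\{P\in\mathrm{Spec}\,A\mid I\subseteq P\}$, $I$ an ideal. $\mathrm{Nil}\,A$ is the intersection of all prime ideals of $A$. A space is irreducible if it is not the union of two proper closed subsets. *)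

Record SkewBrace := {
  sb_car :> Type;
  sb_add : sb_car -> sb_car -> sb_car;
  sb_opp : sb_car -> sb_car;
  sb_circ : sb_car -> sb_car -> sb_car;
  sb_inv : sb_car -> sb_car;
  sb_e : sb_car;
  sb_addA : forall a b c, sb_add a (sb_add b c) = sb_add (sb_add a b) c;
  sb_add0l : forall a, sb_add sb_e a = a;
  sb_add0r : forall a, sb_add a sb_e = a;
  sb_addNl : forall a, sb_add (sb_opp a) a = sb_e;
  sb_addNr : forall a, sb_add a (sb_opp a) = sb_e;
  sb_circA : forall a b c, sb_circ a (sb_circ b c) = sb_circ (sb_circ a b) c;
  sb_circ1l : forall a, sb_circ sb_e a = a;
  sb_circ1r : forall a, sb_circ a sb_e = a;
  sb_circVl : forall a, sb_circ (sb_inv a) a = sb_e;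
  sb_circVr : forall a, sb_circ a (sb_inv a) = sb_e;
  sb_brace : forall a b c,
    sb_circ a (sb_add b c) = sb_add (sb_add (sb_circ a b) (sb_opp a)) (sb_circ a c)
}.

Section Defs.
Variable A : SkewBrace.

Local Notation "a + b" := (sb_add A a b).
Local Notation "- a" := (sb_opp A a).
Local Notation "a 'o' b" := (sb_circ A a b) (at level 40, left associativity).

Definition sb_lambda (a b : A) : A := - a + (a o b).

Definition sb_star (a b : A) : A := (- a + (a o b)) + - b.

Definition is_ideal (I : A -> Prop) : Prop :=
  I (sb_e A) /\
  (forall x y, I x -> I y -> I (x + y)) /\
  (forall x, I x -> I (- x)) /\
  (forall a x, I x -> I ((a + x) + - a)) /\
  (forall x y, I x -> I y -> I (x o y)) /\
  (forall x, I x -> I (sb_inv A x)) /\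
  (forall a x, I x -> I ((a o x) o sb_inv A a)) /\
  (forall a x, I x -> I (sb_lambda a x)).

Definition is_prime_ideal (P : A -> Prop) : Prop :=
  is_ideal P /\
  (exists a, ~ P a) /\
  (forall X Y : A -> Prop,
     (forall x y, X x -> Y y -> P (sb_star x y)) ->
     (forall x, X x -> P x) \/ (forall y, Y y -> P y)).

Definition Spec : (A -> Prop) -> Prop := is_prime_ideal.

Definition H_closed (I : A -> Prop) : (A -> Prop) -> Prop :=
  fun P => is_prime_ideal P /\ (forall x, I x -> P x).

Definition spectral_closed (F : (A -> Prop) -> Prop) : Prop :=
  exists I, is_ideal I /\ (forall P, F P <-> H_closed I P).

Definition Nil : A -> Prop := fun a => forall P, is_prime_ideal P -> P a.

End Defs.

Definition irreducible {T : Type} (X : T -> Prop) (closed : (T -> Prop) -> Prop) : Prop :=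
  (exists x, X x) /\
  ~ (exists F G : T -> Prop,
       closed F /\ closed G /\
       (exists x, X x /\ ~ F x) /\ (exists x, X x /\ ~ G x) /\
       (forall x, X x -> F x \/ G x)).

(* The spectral closed sets are exactly the sets [H(X)] of primes containing an
   arbitrary subset [X], since [H(X)] = [H(I)] for the ideal [I] generated by [X].
   If [Nil A] is prime it is a generic point of [Spec A]: a closed set [H(I)]
   containing it contains every prime, so [Spec A] is irreducible.  Conversely,
   if [X * Y] lies in [Nil A], every prime contains [X] or [Y], so
   [Spec A = H(X) u H(Y)]; irreducibility makes one of them all of [Spec A],
   i.e. [X] or [Y] lies in [Nil A]. *)

From Stdlib Require Import Classical.

Section Irreducible.
Context {T : Type} {X : T -> Prop} {closed : (T -> Prop) -> Prop}.

Lemma irreducible_of_generic_point (x0 : T) :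
  X x0 -> (forall F, closed F -> F x0 -> forall x, X x -> F x) ->
  irreducible X closed.
Proof.
  intros Xx0 generic; split; [now exists x0|].
  intros (F & G & closedF & closedG & [x [Xx Fx]] & [y [Xy Gy]] & cover).
  destruct (cover x0 Xx0) as [Fx0 | Gx0].
  - exact (Fx (generic F closedF Fx0 x Xx)).
  - exact (Gy (generic G closedG Gx0 y Xy)).
Qed.

Lemma irreducible_cover {F G : T -> Prop} :
  irreducible X closed -> closed F -> closed G ->
  (forall x, X x -> F x \/ G x) ->
  (forall x, X x -> F x) \/ (forall x, X x -> G x).
Proof.
  intros [_ no_split] closedF closedG cover.
  apply NNPP; intros not_cover; apply no_split.
  apply not_or_and in not_cover as [notF notG].
  apply not_all_ex_not in notF as [x notFx].
  apply not_all_ex_not in notG as [y notGy].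
  apply imply_to_and in notFx, notGy.
  exists F, G; repeat split; eauto.
Qed.

End Irreducible.

Section Spectrum.
Variable A : SkewBrace.

Lemma is_ideal_bigcap (S : (A -> Prop) -> Prop) :
  (forall I, S I -> is_ideal A I) -> is_ideal A (fun a => forall I, S I -> I a).
Proof.
  intros S_ideal.
  repeat split; intros;
    match goal with SI : S ?I |- ?I _ =>
      destruct (S_ideal I SI) as (? & ? & ? & ? & ? & ? & ? & ?);
      repeat match goal with mem : forall J, S J -> J ?z |- _ =>
        specialize (mem I SI) end
    end; auto.
Qed.

Definition ideal_span (X : A -> Prop) : A -> Prop :=
  fun a => forall I, is_ideal A I /\ (forall x, X x -> I x) -> I a.

Lemma is_ideal_span (X : A -> Prop) : is_ideal A (ideal_span X).
Proof. apply is_ideal_bigcap; tauto. Qed.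

Lemma is_ideal_Nil : is_ideal A (Nil A).
Proof. apply is_ideal_bigcap; intros P [P_ideal _]; exact P_ideal. Qed.

Lemma spectral_closed_H (X : A -> Prop) : spectral_closed A (H_closed A X).
Proof.
  exists (ideal_span X); split; [apply is_ideal_span|].
  intros P; split; intros [P_prime P_sup]; split; auto.
  - intros a span_a; apply span_a; split; [apply P_prime | exact P_sup].
  - intros x Xx; apply P_sup; intros I [_ I_sup]; auto.
Qed.

Lemma Nil_proper : (exists P, Spec A P) -> exists a, ~ Nil A a.
Proof.
  intros [P P_prime]; destruct (proj1 (proj2 P_prime)) as [a notPa].
  exists a; intros Nil_a; exact (notPa (Nil_a P P_prime)).
Qed.

Lemma Nil_generic_point :
  forall F, spectral_closed A F -> F (Nil A) -> forall P, Spec A P -> F P.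
Proof.
  intros F [I [_ F_H]] F_Nil P P_prime.
  apply F_H in F_Nil as [_ I_sub_Nil]; apply F_H.
  split; [exact P_prime|]; intros x Ix; exact (I_sub_Nil x Ix P P_prime).
Qed.

Lemma Spec_cover_of_star_sub_Nil (X Y : A -> Prop) :
  (forall x y, X x -> Y y -> Nil A (sb_star A x y)) ->
  forall P, Spec A P -> H_closed A X P \/ H_closed A Y P.
Proof.
  intros star_Nil P P_prime.
  destruct (proj2 (proj2 P_prime) X Y) as [X_sub | Y_sub].
  - intros x y Xx Yy; apply star_Nil; auto.
  - left; split; auto.
  - right; split; auto.
Qed.

End Spectrum.

Theorem proposition4p13 (A : SkewBrace) :
  irreducible (Spec A) (spectral_closed A) <-> is_prime_ideal A (Nil A).
Proof.
  split.
  - intros Spec_irr; split; [apply is_ideal_Nil|]; split.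
    + apply Nil_proper, Spec_irr.
    + intros X Y star_Nil.
      destruct (irreducible_cover Spec_irr (spectral_closed_H A X) (spectral_closed_H A Y)
                 (Spec_cover_of_star_sub_Nil A X Y star_Nil)) as [HX | HY].
      * left; intros x Xx P P_prime; now apply (HX P P_prime).
      * right; intros y Yy P P_prime; now apply (HY P P_prime).
  - intros Nil_prime.
    exact (irreducible_of_generic_point (Nil A) Nil_prime (Nil_generic_point A)).
Qed.
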